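(* Let $v\ge 0$ and consider $$\min_{y\in\mathbb{R}^{n^-}}\ -\sum_{i=1}^{n^-}\left(\frac{y_i}{\lambda}\right)^{1/\beta}\quad\text{s.t.}\quad y_1\ge y_2\ge\cdots\ge y_{n^-}\ge 0,\qquad \sum_{i=1}^{n^-}h^-_iy_i=v.$$ There exists an index $L\in\{1,\dots,n^-\}$ such that $y^*$ with $y^*_i=Y$ for $1\le i\le L$ and $y^*_i=0$ for $L+1\le i\le n^-$, where $Y:=v/\sum_{i=1}^{L}h^-_i\ (\ge 0)$, is a global optimum of this problem.
   Context: Fix $N\in\mathbb{N}$, $\beta\in(0,1)$, $\lambda>0$, and an integer $1\le n^-\le N$. A function $f:[0,1]\to\mathbb{R}$ is inverse S-shaped if it is strictly increasing, continuously differentiable, and there is $x_0\in[0,1]$ such that $f'$ is strictly decreasing on $[0,x_0]$ and strictly increasing on $[x_0,1]$. Let $W^-:[0,1]\to[0,1]$ be inverse S-shaped with $W^-(0)=0$, $W^-(1)=1$, and $h^-_i:=W^-\!\left(\frac{i}{N}\right)-W^-\!\left(\frac{i-1}{N}\right)$ for $i=1,\dots,n^-$. *)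

From HB Require Import structures.
From mathcomp Require Import all_boot all_order all_algebra.
From mathcomp Require Import all_classical all_reals all_analysis.
Set Implicit Arguments. Unset Strict Implicit. Unset Printing Implicit Defensive.
Import Order.TTheory GRing.Theory Num.Theory.
Import numFieldNormedType.Exports.
Local Open Scope classical_set_scope.
Local Open Scope ring_scope.

Section Defs.
Variable R : realType.

Definition has_deriv01 (f f' : R -> R) (x : R) : Prop :=
  forall e : R, 0 < e -> exists2 d : R, 0 < d &
    forall y : R, 0 <= y <= 1 -> 0 < `|y - x| < d ->
      `|(f y - f x) / (y - x) - f' x| < e.

Definition inverse_S_shaped (f : R -> R) : Prop :=
  (forall x y : R, 0 <= x -> x < y -> y <= 1 -> f x < f y) /\
  exists f' : R -> R,
    (forall x : R, 0 <= x <= 1 -> has_deriv01 f f' x) /\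
    ({within [set x : R | 0 <= x <= 1], continuous f'}) /\
    exists2 x0 : R, 0 <= x0 <= 1 &
      (forall x y : R, 0 <= x -> x < y -> y <= x0 -> f' y < f' x) /\
      (forall x y : R, x0 <= x -> x < y -> y <= 1 -> f' x < f' y).

(* h^-_i for i = 1..n^-, indexed 0-based by i : 'I_nm (i represents i+1). *)
Definition hminus (W : R -> R) (N nm : nat) (i : 'I_nm) : R :=
  W (i.+1%:R / N%:R) - W (i%:R / N%:R).

Definition feasible (W : R -> R) (N nm : nat) (v : R) (y : 'I_nm -> R) : Prop :=
  (forall i j : 'I_nm, (i <= j)%N -> y j <= y i) /\
  (forall i : 'I_nm, 0 <= y i) /\
  \sum_(i < nm) hminus W N i * y i = v.

Definition objective (beta lambda : R) (nm : nat) (y : 'I_nm -> R) : R :=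
  - \sum_(i < nm) (y i / lambda) `^ (beta^-1).

Definition ystar (W : R -> R) (N nm : nat) (v : R) (L : nat) (i : 'I_nm) : R :=
  if (i < L)%N then v / (\sum_(j < nm | (j < L)%N) hminus W N j) else 0.

End Defs.

(** The objective is a sum of convex functions of the [y_i] (as [1/beta >= 1]),
    so it suffices to write every feasible point as a convex combination of the
    step vectors [ystar L], [1 <= L <= n^-]: by Jensen's inequality the
    objective of [y] is then at least that of the best step vector.  The
    decomposition is the layer-cake formula [y = sum_j (y_j - y_(j+1)) 1_[1,j]]:
    the layer [1_[1,j]] is the multiple [H_j / v] of [ystar j], where
    [H_j = h_1 + ... + h_j], and the weights [(y_j - y_(j+1)) H_j / v],
    nonnegative as [y] is nonincreasing, add up to [sum_i h_i y_i / v = 1]. *)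

From HB Require Import structures.
From mathcomp Require Import all_boot all_order all_algebra.
From mathcomp Require Import all_classical all_reals all_analysis.
Set Implicit Arguments. Unset Strict Implicit. Unset Printing Implicit Defensive.
Import Order.TTheory GRing.Theory Num.Theory.
Local Open Scope ring_scope.

Section Jensen.
Variables (R : realFieldType) (f : R -> R).
Hypothesis f_convex : forall t x y : R, 0 <= t <= 1 -> 0 <= x -> 0 <= y ->
  f (t * x + (1 - t) * y) <= t * f x + (1 - t) * f y.

Lemma jensen (I : eqType) (s : seq I) (w a : I -> R) :
  (forall i, 0 <= w i) -> (forall i, 0 <= a i) -> \sum_(i <- s) w i = 1 ->
  f (\sum_(i <- s) w i * a i) <= \sum_(i <- s) w i * f (a i).
Proof.
move=> w_ge0 a_ge0; elim: s w w_ge0 => [|x s IHs] w w_ge0.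
  by rewrite big_nil => /eqP; rewrite eq_sym oner_eq0.
rewrite !big_cons; set S := \sum_(i <- s) w i => wS1.
have S_ge0 : 0 <= S by exact: sumr_ge0.
have wx_eq : w x = 1 - S by rewrite -wS1 addrK.
have [S0 | S_neq0] := eqVneq S 0.
  have w_s0 i : i \in s -> w i = 0.
    by move: S0 => /eqP; rewrite psumr_eq0 // => /allP w_s0 /w_s0/eqP.
  have sum_s0 (g : I -> R) : \sum_(i <- s) w i * g i = 0.
    by rewrite big_seq big1 // => i /w_s0 ->; rewrite mul0r.
  by rewrite !sum_s0 wx_eq S0 subr0 !mul1r !addr0.
pose w' i := w i / S.
have rescale (g : I -> R) :
    \sum_(i <- s) w i * g i = S * \sum_(i <- s) w' i * g i.
  rewrite mulr_sumr; apply: eq_bigr => i _.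
  by rewrite /w' mulrA mulrCA divff ?mulr1.
have w'_ge0 i : 0 <= w' i by rewrite divr_ge0.
have w'_sum1 : \sum_(i <- s) w' i = 1.
  by rewrite -mulr_suml -/S divff.
have S_eq : S = 1 - w x by rewrite wx_eq opprB addrC subrK.
rewrite !rescale S_eq; apply: le_trans (f_convex _ _ _) _.
- by rewrite w_ge0 -subr_ge0 -S_eq.
- exact: a_ge0.
- by apply: sumr_ge0 => i _; rewrite mulr_ge0.
- by rewrite lerD2l ler_wpM2l -?S_eq // IHs.
Qed.

Lemma sum_convex_mix (n m : nat) (w : 'I_m -> R) (z : 'I_m -> 'I_n -> R) :
  (forall j, 0 <= w j) -> (forall j i, 0 <= z j i) -> \sum_j w j = 1 ->
  \sum_(i < n) f (\sum_j w j * z j i) <= \sum_j w j * \sum_(i < n) f (z j i).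
Proof.
move=> w_ge0 z_ge0 w_sum1; under [leRHS]eq_bigr do rewrite mulr_sumr.
by rewrite exchange_big /=; apply: ler_sum => i _; exact: jensen.
Qed.

End Jensen.

Lemma convex_comb_le (R : numDomainType) (m : nat) (w c : 'I_m -> R) (M : R) :
  (forall j, 0 <= w j) -> \sum_j w j = 1 -> (forall j, c j <= M) ->
  \sum_j w j * c j <= M.
Proof.
move=> w_ge0 w_sum1 c_le; rewrite -[leRHS]mul1r -w_sum1 mulr_suml.
by apply: ler_sum => j _; exact: ler_wpM2l.
Qed.

Lemma powR_div_convex (R : realType) (lambda p t x y : R) :
  0 < lambda -> 1 <= p -> 0 <= t <= 1 -> 0 <= x -> 0 <= y ->
  ((t * x + (1 - t) * y) / lambda) `^ p <=
    t * (x / lambda) `^ p + (1 - t) * (y / lambda) `^ p.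
Proof.
move=> lambda_gt0 p_ge1 /andP[t_ge0 t_le1] x_ge0 y_ge0.
rewrite mulrDl -!mulrA.
apply: (convex_powR p_ge1 (Itv01 t_ge0 t_le1)).
  by rewrite inE /= in_itv /= divr_ge0 // ltW.
by rewrite inE /= in_itv /= divr_ge0 // ltW.
Qed.

Lemma sum_tail_telescope (V : zmodType) (n i : nat) (u : nat -> V) :
  (i <= n)%N -> u n = 0 -> \sum_(j < n | (i <= j)%N) (u j - u j.+1) = u i.
Proof.
move=> le_in un0.
transitivity (\sum_(i <= j < n) (u j - u j.+1)); first by rewrite big_geq_mkord.
under eq_bigr do rewrite -opprB.
by rewrite sumrN telescope_sumr // un0 sub0r opprK.
Qed.

Lemma hminus_gt0 (R : realType) (W : R -> R) (N nm : nat) :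
  (0 < N)%N -> (nm <= N)%N ->
  (forall x y : R, 0 <= x -> x < y -> y <= 1 -> W x < W y) ->
  forall i : 'I_nm, 0 < hminus W N i.
Proof.
move=> N_gt0 nm_le_N W_incr i; have Nr_gt0 : 0 < N%:R :> R by rewrite ltr0n.
rewrite subr_gt0; apply: W_incr.
- by rewrite divr_ge0.
- by rewrite ltr_pM2r ?invr_gt0 // ltr_nat.
- by rewrite ler_pdivrMr // mul1r ler_nat (leq_trans (ltn_ord i)).
Qed.

Definition extend0 {V : nmodType} {n : nat} (y : 'I_n -> V) (j : nat) : V :=
  if insub j is Some i then y i else 0.

Lemma extend0_ord (V : nmodType) (n : nat) (y : 'I_n -> V) (i : 'I_n) :
  extend0 y i = y i.
Proof. by rewrite /extend0 valK. Qed.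

Lemma extend0_out (V : nmodType) (n : nat) (y : 'I_n -> V) (j : nat) :
  (n <= j)%N -> extend0 y j = 0.
Proof. by move=> le_nj; rewrite /extend0 insubN // -leqNgt. Qed.

Section StepVectors.
Variables (R : realType) (W : R -> R) (N nm : nat) (v : R).
Hypothesis h_gt0 : forall i : 'I_nm, 0 < hminus W N i.

Local Notation h := (hminus W N).
Local Notation mass L := (\sum_(j < nm | (j < L)%N) h j).
Local Notation step L := (@ystar R W N nm v L).

Lemma mass_gt0 (k : 'I_nm) : 0 < mass k.+1.
Proof.
rewrite (bigD1 k) //=; apply: lt_le_trans (h_gt0 k) _.
by rewrite lerDl sumr_ge0 // => j _; exact: ltW.
Qed.

Lemma step_ge0 : 0 <= v -> forall k i : 'I_nm, 0 <= step k.+1 i.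
Proof.
move=> v_ge0 k i; rewrite /ystar; case: ifP => // _.
by rewrite divr_ge0 // ltW // mass_gt0.
Qed.

Lemma feasible_step (k : 'I_nm) : 0 <= v -> feasible W N v (step k.+1).
Proof.
move=> v_ge0; split; [|split].
- move=> i j le_ij; rewrite /ystar.
  case: ifP => [lt_jk|_]; last exact: step_ge0.
  by rewrite (leq_ltn_trans le_ij lt_jk).
- exact: step_ge0.
- rewrite (eq_bigr (fun i : 'I_nm =>
      if (i < k.+1)%N then h i * (v / mass k.+1) else 0)).
    by rewrite -big_mkcond -mulr_suml mulrCA mulfV ?mulr1 // gt_eqF // mass_gt0.
  by move=> i _; rewrite /ystar; case: ifP; rewrite ?mulr0.
Qed.

Lemma feasible0_eq0 (y : 'I_nm -> R) : feasible W N 0 y -> forall i, y i = 0.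
Proof.
move=> [_ [y_ge0 y_sum]] i.
have hy_ge0 j : true -> 0 <= h j * y j by rewrite mulr_ge0 // ltW.
have /(_ i isT)/eqP := psumr_eq0P hy_ge0 y_sum.
by rewrite mulf_eq0 gt_eqF //= => /eqP.
Qed.

Local Notation gap y j := (extend0 y j - extend0 y j.+1).

Lemma layer_cake (y : 'I_nm -> R) (i : 'I_nm) :
  y i = \sum_(j < nm | (i <= j)%N) gap y j.
Proof. by rewrite sum_tail_telescope ?extend0_ord ?extend0_out // ltnW. Qed.

Lemma gap_ge0 (y : 'I_nm -> R) (j : 'I_nm) : feasible W N v y -> 0 <= gap y j.
Proof.
move=> [y_mono [y_ge0 _]]; rewrite extend0_ord subr_ge0 /extend0.
case: insubP => [j' _ j'E | _]; last exact: y_ge0.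
by apply: y_mono; rewrite j'E.
Qed.

Definition layer_weight (y : 'I_nm -> R) (j : 'I_nm) : R :=
  gap y j * mass j.+1 / v.

Lemma sum_layer_weight (y : 'I_nm -> R) :
  feasible W N v y -> 0 < v -> \sum_j layer_weight y j = 1.
Proof.
move=> y_feas v_gt0; rewrite -mulr_suml.
suff -> : \sum_(j < nm) gap y j * mass j.+1 = v by rewrite divff // gt_eqF.
have [_ [_ <-]] := y_feas; under eq_bigr do rewrite mulr_sumr.
rewrite (exchange_big_dep xpredT) //=; apply: eq_bigr => l _.
rewrite [RHS]mulrC (layer_cake y l) mulr_suml; apply: eq_bigl => j.
by rewrite ltnS.
Qed.

Lemma step_decomposition (y : 'I_nm -> R) : feasible W N v y -> 0 < v ->
  exists2 w : 'I_nm -> R, (forall j, 0 <= w j) /\ \sum_j w j = 1 &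
    forall i, y i = \sum_j w j * step j.+1 i.
Proof.
move=> y_feas v_gt0; exists (layer_weight y); first split.
- by move=> j; rewrite divr_ge0 ?mulr_ge0 ?gap_ge0 // ltW // mass_gt0.
- exact: sum_layer_weight.
move=> i; rewrite (layer_cake y i) big_mkcond; apply: eq_bigr => j _.
rewrite /ystar ltnS; case: ifP => _; last by rewrite mulr0.
by rewrite /layer_weight mulrA divfK ?gt_eqF // mulfK // gt_eqF // mass_gt0.
Qed.

End StepVectors.

Theorem theorem2 (R : realType) (N : nat) (beta lambda : R) (nm : nat)
  (W : R -> R) (v : R) :
  (0 < N)%N -> 0 < beta < 1 -> 0 < lambda -> (1 <= nm <= N)%N ->
  inverse_S_shaped W -> W 0 = 0 -> W 1 = 1 ->
  (forall x : R, 0 <= x <= 1 -> 0 <= W x <= 1) ->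
  0 <= v ->
  exists L : nat, (1 <= L <= nm)%N /\
    0 <= v / (\sum_(j < nm | (j < L)%N) hminus W N j) /\
    @feasible R W N nm v (@ystar R W N nm v L) /\
    forall y : 'I_nm -> R, feasible W N v y ->
      objective beta lambda (@ystar R W N nm v L) <= objective beta lambda y.
Proof.
move=> N_gt0 /andP[beta_gt0 beta_lt1] lambda_gt0 /andP[nm_gt0 nm_le_N]
  [W_incr _] _ _ _ v_ge0.
have h_gt0 := hminus_gt0 N_gt0 nm_le_N W_incr.
have p_ge1 : 1 <= beta^-1 by rewrite invf_ge1 // ltW.
pose F (y : 'I_nm -> R) := \sum_(i < nm) (y i / lambda) `^ beta^-1.
have [k _ k_max] :=
  @arg_maxP _ R _ (Ordinal nm_gt0) xpredT (fun k => F (ystar W N v k.+1)) isT.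
exists k.+1; split; first exact: ltn_ord.
split; first by rewrite divr_ge0 // ltW // mass_gt0.
split; first exact: feasible_step.
move=> y y_feas; rewrite lerN2.
move: v_ge0 y_feas; rewrite le_eqVlt => /predU1P[<- | v_gt0] y_feas.
  suff -> : y = ystar W N 0 k.+1 by [].
  apply/funext => i.
  by rewrite (feasible0_eq0 h_gt0 y_feas) /ystar mul0r if_same.
have [w [w_ge0 w_sum1] y_eq] := step_decomposition h_gt0 y_feas v_gt0.
under eq_bigr do rewrite y_eq.
have f_convex := powR_div_convex lambda_gt0 p_ge1.
have steps_ge0 := step_ge0 h_gt0 (ltW v_gt0).
apply: le_trans (sum_convex_mix f_convex w_ge0 steps_ge0 w_sum1) _.
by apply: convex_comb_le => // j; exact: k_max.
Qed.
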